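(* Let $\epsilon\ge 0$ and let $A\subseteq\{0,1\}^n$ with $|A|\ge 2^{(1-\epsilon)n}$. Then for any $L\subseteq[n]$ there is a subset $A'\subseteq A$ that is $\epsilon$-dense with respect to $L$.
   Context: $[n]=\{1,\dots,n\}$. For $x\in\{0,1\}^n$ and $P\subseteq[n]$, $x_P\in\{0,1\}^P$ denotes the projection of $x$ onto the coordinates in $P$, and for $X\subseteq\{0,1\}^n$, $X_P=\{x_P: x\in X\}$. A set $A\subseteq\{0,1\}^n$ is $\epsilon$-dense with respect to $L\subseteq[n]$ if $|A_L|\ge 2^{|L|-\epsilon n-1}$ and for every $a\in A$ the number of $a'\in A$ with $a'_L=a_L$ is at least $2^{n-|L|-\epsilon n-1}$. *)

From mathcomp Require Import all_boot.
From Stdlib Require Import Reals.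

Set Implicit Arguments.
Unset Strict Implicit.
Unset Printing Implicit Defensive.

(* {0,1}^n is represented as {ffun 'I_n -> bool}; [n] is 'I_n (0-indexed). *)
Notation cube n := {ffun 'I_n -> bool}.

(* Projection x_L of x onto the coordinates in L, encoded as the point of the
   cube that agrees with x on L and is false outside L (this is in bijection
   with {0,1}^L, so it preserves equality of projections and cardinalities). *)
Definition proj n (L : {set 'I_n}) (x : cube n) : cube n :=
  [ffun i => (i \in L) && x i].

Definition projset n (L : {set 'I_n}) (X : {set cube n}) : {set cube n} :=
  [set proj L x | x in X].

Definition eps_dense n (eps : R) (L : {set 'I_n}) (A : {set cube n}) : Prop :=
  (Rpower 2 (INR #|L| - eps * INR n - 1) <= INR #|projset L A|)%R /\
  (forall a, a \in A ->
     (Rpower 2 (INR n - INR #|L| - eps * INR n - 1)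
        <= INR #|[set a' in A | proj L a' == proj L a]|)%R).

(* Keep only the points of A whose fibre over their projection x_L has at
   least t = 2^(n-|L|-eps n-1) points of A.  At most 2^|L| fibres are
   discarded, each of size below t, so at most 2^|L| t = 2^((1-eps)n-1) <= |A|/2
   points are lost; the kept set A' therefore has at least 2^((1-eps)n-1)
   points.  Since every fibre has at most 2^(n-|L|) points, A' has at least
   2^(|L|-eps n-1) distinct projections, while its fibres are those of A. *)

From mathcomp Require Import all_boot.
From Stdlib Require Import Reals Lra.

Lemma INR_expn2 k : INR (expn 2 k) = Rpower 2 (INR k).
Proof.
rewrite Rpower_pow; last lra.
elim: k => [|k IH] //.
by rewrite expnS -multE mult_INR IH.
Qed.

Lemma INR_sum_le {T : finType} (S : {set T}) (f : T -> nat) (r : R) :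
  (forall i, i \in S -> (INR (f i) <= r)%R) ->
  (INR (\sum_(i in S) f i) <= INR #|S| * r)%R.
Proof.
move=> le_fr; rewrite -sum1_card.
elim/big_rec2: _ => [|i x y Si IH]; first by rewrite /=; lra.
rewrite -!plusE !plus_INR /=; have := le_fr i Si; lra.
Qed.

Lemma card_sum_fibres {T U : finType} (f : T -> U) (X : {set T}) :
  #|X| = \sum_(p in f @: X) #|[set a in X | f a == p]|.
Proof.
rewrite -sum1_card (partition_big f (mem (f @: X))) /=; last first.
  by move=> a Xa; apply: imset_f.
apply: eq_bigr => p _; rewrite -sum1_card; apply: eq_bigl => a.
by rewrite inE.
Qed.

Section Fibres.

Context {n : nat} (L : {set 'I_n}).

Definition fibre (X : {set cube n}) (a : cube n) : {set cube n} :=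
  [set a' in X | proj L a' == proj L a].

Lemma card_projset_le (X : {set cube n}) : #|projset L X| <= expn 2 #|L|.
Proof.
pose supp (x : cube n) := [set i | x i].
have supp_inj : injective supp.
  by move=> x y /setP eq_xy; apply/ffunP => i; move: (eq_xy i); rewrite !inE.
rewrite -(card_imset _ supp_inj) -card_powerset; apply: subset_leq_card.
apply/subsetP => _ /imsetP [_ /imsetP [y _ ->] ->].
rewrite powersetE; apply/subsetP => i; rewrite inE ffunE.
by case/andP.
Qed.

Lemma card_fibre_le (X : {set cube n}) (p : cube n) :
  #|[set a in X | proj L a == p]| <= expn 2 (n - #|L|).
Proof.
pose supp_out (x : cube n) := [set i | (i \notin L) && x i].
have supp_out_inj : {in [set a in X | proj L a == p] &, injective supp_out}.
  move=> x y; rewrite !inE => /andP [_ /eqP px] /andP [_ /eqP py] /setP eq_xy.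
  apply/ffunP => i; case Li: (i \in L).
    by move: px; rewrite -py => /ffunP /(_ i); rewrite !ffunE Li.
  by move: (eq_xy i); rewrite !inE Li.
have -> : n - #|L| = #|~: L| by rewrite -{1}(card_ord n) -(cardsC L) addKn.
rewrite -(card_in_imset supp_out_inj) -card_powerset; apply: subset_leq_card.
apply/subsetP => _ /imsetP [x _ ->].
rewrite powersetE; apply/subsetP => i; rewrite !inE.
by case/andP.
Qed.

Lemma card_le_projset_mul (X : {set cube n}) :
  #|X| <= #|projset L X| * expn 2 (n - #|L|).
Proof.
rewrite (card_sum_fibres (proj L) X) -sum_nat_const.
by apply: leq_sum => p _; apply: card_fibre_le.
Qed.

Variable t : R.

Definition heavy_part (A : {set cube n}) : {set cube n} :=
  [set a in A | if Rle_dec t (INR #|fibre A a|) then true else false].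

Lemma heavy_part_sub (A : {set cube n}) : heavy_part A \subset A.
Proof. by apply/subsetP => a; rewrite inE => /andP []. Qed.

Lemma fibre_heavy_part (A : {set cube n}) (a : cube n) :
  a \in heavy_part A -> fibre (heavy_part A) a = fibre A a.
Proof.
move=> Ha; apply/setP => b; rewrite !inE; apply/andP/andP => [[/andP [] //]|].
case=> Ab /eqP eq_ab; rewrite Ab eq_ab eqxx; split=> //.
suff -> : fibre A b = fibre A a by move: Ha; rewrite inE => /andP [].
by rewrite /fibre eq_ab.
Qed.

Lemma card_fibre_heavy_part (A : {set cube n}) (a : cube n) :
  a \in heavy_part A -> (t <= INR #|fibre (heavy_part A) a|)%R.
Proof.
move=> Ha; rewrite fibre_heavy_part //.
by move: Ha; rewrite inE => /andP [_]; case: Rle_dec.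
Qed.

Lemma card_light_part_le (A : {set cube n}) :
  (0 <= t)%R -> (INR #|A :\: heavy_part A| <= Rpower 2 (INR #|L|) * t)%R.
Proof.
move=> t_ge0; set D := A :\: heavy_part A.
rewrite (card_sum_fibres (proj L) D).
apply: Rle_trans (INR_sum_le _ _ t _) _.
  move=> _ /imsetP [d Dd ->].
  have sub_fibre : [set a in D | proj L a == proj L d] \subset fibre A d.
    by apply/subsetP => b; rewrite !inE => /andP [/andP [_ ->] ->].
  apply: Rle_trans (le_INR _ _ (leP (subset_leq_card sub_fibre))) _.
  move: Dd; rewrite !inE => /andP [+ Ad]; rewrite Ad /=.
  by case: Rle_dec => // /Rnot_le_lt ? _; lra.
apply: Rmult_le_compat_r => //; rewrite -INR_expn2.
exact/le_INR/leP/card_projset_le.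
Qed.

End Fibres.

Theorem claim1 (n : nat) (eps : R) (A : {set cube n}) :
  (0 <= eps)%R ->
  (Rpower 2 ((1 - eps) * INR n) <= INR #|A|)%R ->
  forall L : {set 'I_n}, exists A' : {set cube n}, A' \subset A /\ eps_dense eps L A'.
Proof.
move=> _ large_A L.
set t := Rpower 2 (INR n - INR #|L| - eps * INR n - 1).
set A' := heavy_part L t A.
exists A'; split; first exact: heavy_part_sub.
split; last by move=> a; apply: card_fibre_heavy_part.
have L_le_n : #|L| <= n by have := max_card L; rewrite card_ord.
have card_A : INR #|A| = (INR #|A'| + INR #|A :\: A'|)%R.
  by rewrite -plus_INR -(cardsID A' A) (setIidPr (heavy_part_sub _ _ _)).
have light : (INR #|A :\: A'| <= Rpower 2 (INR n - eps * INR n - 1))%R.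
  have := card_light_part_le L t A (Rlt_le _ _ (exp_pos _)).
  by rewrite /t -Rpower_plus; congr (_ <= Rpower 2 _)%R; ring.
have halve : Rpower 2 ((1 - eps) * INR n)
           = (2 * Rpower 2 (INR n - eps * INR n - 1))%R.
  rewrite (_ : (1 - eps) * INR n = 1 + (INR n - eps * INR n - 1))%R; last ring.
  by rewrite Rpower_plus Rpower_1 //; lra.
have large_A' : (Rpower 2 (INR n - eps * INR n - 1) <= INR #|A'|)%R by lra.
have sparse_A' :
    (INR #|A'| <= INR #|projset L A'| * Rpower 2 (INR n - INR #|L|))%R.
  rewrite -(minus_INR _ _ (leP L_le_n)) -INR_expn2 -mult_INR.
  exact/le_INR/leP/card_le_projset_mul.
apply: (Rmult_le_reg_r (Rpower 2 (INR n - INR #|L|))); first exact: exp_pos.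
rewrite -Rpower_plus; apply: Rle_trans sparse_A'; apply: Rle_trans large_A'.
by right; congr (Rpower 2 _); ring.
Qed.
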